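(* Let $\mathcal{F}$ be a set of functions satisfying premise (P) below, and let $F\in\mathcal{F}$. Then for every positive integer $n$, either every closed $\{\neq_2\}\mid\{F\}$-network with exactly $n$ vertices on the $F$-side has value $0$, or every such network has nonzero value.
   Context: $\neq_2$ is the binary function with $\neq_2(x,y)=1$ if $x\neq y$ and $0$ otherwise. $\mathrm{Holant}_{\neq}(\mathcal{F})$ denotes the problem $\#\{\neq_2\}\mid\mathcal{F}$: inputs are finite bipartite multigraphs in which every vertex on one side has degree 2 and carries $\neq_2$ (so these act as edges), and every vertex $v$ on the other side (''$F$-side'') carries a function $F_v\in\mathcal{F}$ of arity $\deg(v)$ with an ordering of its incident edges; the value is $\sum_{\sigma:E\to\{0,1\}}\prod_v(\text{vertex functions})$. A gadget is such a network with dangling edges at $F$-side vertices; its function is obtained by fixing the dangling edges and summing; a function is realizable if it is the function of a gadget. Premise (P): every binary function realizable in $\mathrm{Holant}_{\neq}(\mathcal{F})$ is of the form $\lambda\cdot\neq_2$ for some $\lambda\in\mathbb{C}$, and every arity-4 function realizable in $\mathrm{Holant}_{\neq}(\mathcal{F})$ is of the form $(x_1,\dots,x_4)\mapsto\lambda\,\neq_2(x_{\tau(1)},x_{\tau(2)})\neq_2(x_{\tau(3)},x_{\tau(4)})$ for some $\lambda\in\mathbb{C}$ and some permutation $\tau$ of $\{1,2,3,4\}$. *)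

From HB Require Import structures.
From mathcomp Require Import all_boot all_order all_algebra all_fingroup.
Set Implicit Arguments. Unset Strict Implicit. Unset Printing Implicit Defensive.
Import GRing.Theory.
Local Open Scope ring_scope.

Section Holant.
Variable K : comNzRingType.

Record hsig := HSig { ar : nat; fn : ar.-tuple bool -> K }.

Definition neq2 (x y : bool) : K := if x != y then 1 else 0.

(* The edges of the bipartite graph are exactly the
   "half-edges" (ports) of the F-side vertices, numbered 'I_gm.
   - F-side vertices are 'I_gnv, vertex v carries function glab v, and
     gport v lists its incident edges in order (length = arity).
   - gpair h = Some h' means edges h and h' are the two edges of one
     ≠2-vertex (degree 2); gpair h = None means h is a dangling edge.
   - gdang is the ordered list of dangling edges. *)
Record gadget := Gadget {
  gm : nat;
  gnv : nat;
  glab : 'I_gnv -> hsig;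
  gport : forall v : 'I_gnv, (ar (glab v)).-tuple 'I_gm;
  gpair : 'I_gm -> option 'I_gm;
  gdang : seq 'I_gm }.

Definition wf_gadget (G : gadget) : Prop :=
  (forall (v w : 'I_(gnv G)) (i : 'I_(ar (glab v))) (j : 'I_(ar (glab w))),
      tnth (gport v) i = tnth (gport w) j -> v = w /\ (i : nat) = j) /\
  (forall h : 'I_(gm G), exists (v : 'I_(gnv G)) (i : 'I_(ar (glab v))),
      tnth (gport v) i = h) /\
  (forall h h' : 'I_(gm G), gpair h = Some h' -> h' != h /\ gpair h' = Some h) /\
  uniq (gdang G) /\
  (forall h : 'I_(gm G), (h \in gdang G) = (gpair h == None)).

(* Contribution of the ≠2-vertices (each counted once, via h < h'). *)
Definition neq_weight (G : gadget) (s : {ffun 'I_(gm G) -> bool}) : K :=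
  \prod_(h : 'I_(gm G))
     match gpair h with
     | Some h' => if (h < h')%N then neq2 (s h) (s h') else 1
     | None => 1
     end.

Definition holant_val (G : gadget) (x : seq bool) : K :=
  \sum_(s : {ffun 'I_(gm G) -> bool} |
          [forall j : 'I_(size (gdang G)),
             s (tnth (in_tuple (gdang G)) j) == nth false x j])
    (\prod_(v : 'I_(gnv G)) fn (map_tuple s (gport v))) * neq_weight s.

Definition gadget_over (Fs : hsig -> Prop) (G : gadget) : Prop :=
  wf_gadget G /\ forall v : 'I_(gnv G), Fs (glab v).

Definition realizable (Fs : hsig -> Prop) (k : nat) (f : k.-tuple bool -> K) : Prop :=
  exists G : gadget, [/\ gadget_over Fs G, size (gdang G) = k &
    forall x : k.-tuple bool, f x = holant_val G x].

Definition premiseP (Fs : hsig -> Prop) : Prop :=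
  (forall f : 2.-tuple bool -> K, realizable Fs f ->
     exists lam : K, forall x : 2.-tuple bool,
       f x = lam * neq2 (tnth x ord0) (tnth x (inord 1))) /\
  (forall f : 4.-tuple bool -> K, realizable Fs f ->
     exists (lam : K) (tau : 'S_4), forall x : 4.-tuple bool,
       f x = lam * neq2 (tnth x (tau (inord 0))) (tnth x (tau (inord 1)))
                 * neq2 (tnth x (tau (inord 2))) (tnth x (tau (inord 3)))).

Definition closed_network (F : hsig) (n : nat) (G : gadget) : Prop :=
  wf_gadget G /\ gdang G = [::] /\ gnv G = n /\ forall v : 'I_(gnv G), glab v = F.
End Holant.

(* A closed network with n vertices carrying F is, up to renaming its edges, a
   fixed-point-free involution p (a perfect matching) of the n * ar F ports, and its
   value is  sum_t prod_v F(t restricted to v) * [t x <> t (p x) for all x].  Any two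
   perfect matchings are connected by switches, which replace matched pairs
   {a, p a}, {b, p b} by {a, b}, {p a, p b}.  Cutting these two pairs out of the
   network leaves an arity-4 gadget, equal by (P) to lam * neq2 * neq2 for some
   pairing of its dangling edges.  Before and after the switch, the value is lam times
   the number of 2-colourings of the four dangling edges that are proper for two
   perfect matchings of {0,1,2,3}; that number is positive, since any two such
   matchings have a common proper balanced colouring.  So a switch does not change
   whether the value vanishes. *)

From HB Require Import structures.
From mathcomp Require Import all_boot all_order all_algebra all_fingroup.
From mathcomp Require Import complex.
From mathcomp Require Import reals.
From Stdlib Require Import FunctionalExtensionality Classical.
Import GRing.Theory Num.Theory.
Local Open Scope ring_scope.
Local Open Scope complex_scope.
Set Implicit Arguments. Unset Strict Implicit. Unset Printing Implicit Defensive.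

Section Matchings.
Variable T : finType.

Definition matching (p : T -> T) : Prop := involutive p /\ forall x, p x != x.

Definition switch (p : T -> T) (x y z : T) : T :=
  if z == x then y else if z == y then x
  else if z == p x then p y else if z == p y then p x else p z.

Lemma mem_pairs_involutive (p : T -> T) (a b z : T) : involutive p ->
  (p z \in [:: a; p a; b; p b]) = (z \in [:: a; p a; b; p b]).
Proof.
move=> pI; rewrite !inE (inv_eq pI) !(inj_eq (inv_inj pI)) (inv_eq pI).
by rewrite orbCA (orbC (z == p b)).
Qed.

Section Switch.
Variables (p : T -> T) (x y : T).
Hypotheses (pM : matching p) (yx : y != x) (ypx : y != p x).

Lemma switch_uniq : uniq [:: x; p x; y; p y].
Proof.
have [pI pF] := pM.
have xpy : x != p y by rewrite eq_sym (inv_eq pI).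
rewrite /= !inE !negb_or (inj_eq (inv_inj pI)) xpy (eq_sym x) pF (eq_sym x) yx.
by rewrite (eq_sym (p x)) ypx (eq_sym y) pF.
Qed.

Lemma switch_out z : z \notin [:: x; p x; y; p y] -> switch p x y z = p z.
Proof.
rewrite !inE !negb_or => /and4P[/negbTE zx /negbTE zpx /negbTE zy /negbTE zpy].
by rewrite /switch zx zy zpx zpy.
Qed.

Lemma switch_on_pairs :
  [/\ switch p x y x = y, switch p x y y = x,
      switch p x y (p x) = p y & switch p x y (p y) = p x].
Proof.
have [pI pF] := pM.
split; rewrite /switch ?eqxx ?(negbTE yx) //.
  by rewrite (negbTE (pF x)) eq_sym (negbTE ypx).
by rewrite (inv_eq pI) (negbTE ypx) (negbTE (pF y)) (inj_eq (inv_inj pI)) (negbTE yx).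
Qed.

Lemma switch_matching : matching (switch p x y).
Proof.
have [pI pF] := pM; have [sx sy spx spy] := switch_on_pairs.
split=> z; case: (boolP (z \in [:: x; p x; y; p y])) => [|zD].
- by rewrite !inE => /or4P[] /eqP->; rewrite ?sx ?sy ?spx ?spy.
- by rewrite !switch_out ?mem_pairs_involutive ?pI.
- rewrite !inE => /or4P[] /eqP->; rewrite ?sx ?sy ?spx ?spy //;
  by rewrite ?(inj_eq (inv_inj pI)) // eq_sym.
- by rewrite switch_out.
Qed.

Lemma switch_mismatch_proper (q : T -> T) : matching q -> q x = y ->
  [set z | switch p x y z != q z] \proper [set z | p z != q z].
Proof.
move=> [qI _] qx; have [pI _] := pM; have [sx sy spx spy] := switch_on_pairs.
have qy : q y = x by rewrite -qx qI.
apply/properP; split; last by exists x; rewrite !inE ?sx qx ?eqxx // eq_sym.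
apply/subsetP => z; rewrite !inE.
case: (boolP (z \in [:: x; p x; y; p y])) => [|zD]; last by rewrite switch_out.
rewrite !inE => /or4P[] /eqP->; rewrite ?sx ?sy ?spx ?spy ?qx ?qy ?eqxx // => _.
- by rewrite pI; apply: contra ypx => /eqP/(congr1 q); rewrite qI qx => /eqP.
- rewrite pI; apply: contra ypx => /eqP/(congr1 q); rewrite qI qy => /(congr1 p).
  by rewrite pI eq_sym => /eqP.
Qed.

End Switch.

Lemma matching_switch_invariant (A : Type) (c : (T -> T) -> A) :
  (forall p q, p =1 q -> c p = c q) ->
  (forall p x y, matching p -> y != x -> y != p x -> c (switch p x y) = c p) ->
  forall p q, matching p -> matching q -> c p = c q.
Proof.
move=> c_ext c_switch p q pM qM.
move: {2}#|_| (leqnn #|[set z | p z != q z]|) => m.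
elim: m p pM => [|m IHm] p pM le_m.
  apply: c_ext => z; apply/eqP; apply: contraT => pqz.
  by move: le_m; rewrite leqn0 => /eqP/cards0_eq/setP/(_ z); rewrite !inE pqz.
case: (pickP [pred z | p z != q z]) => [x /= pqx | pq]; last first.
  by apply: c_ext => z; apply/eqP/negbFE/pq.
have [qI qF] := qM.
have yx := qF x.
have ypx : q x != p x by rewrite eq_sym.
rewrite -(c_switch p x (q x)) //; apply: IHm; first exact: switch_matching.
rewrite -ltnS; apply: leq_trans le_m; apply/proper_card/switch_mismatch_proper => //.
Qed.

End Matchings.

Section Gadgets.
Variable K : comNzRingType.

Lemma neq2E (x y : bool) : neq2 K x y = (x != y)%:R.
Proof. by rewrite /neq2; case: (x != y). Qed.

Lemma prodr_natb (I : finType) (b : I -> bool) :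
  \prod_i ((b i)%:R : K) = [forall i, b i]%:R.
Proof.
case: (boolP [forall i, b i]) => [/forallP all_b | /forallPn[i nbi]].
  by apply: big1 => i _; rewrite all_b.
by rewrite (bigD1 i) //= (negbTE nbi) mul0r.
Qed.

Definition assignment_weight (G : gadget K) (s : {ffun 'I_(gm G) -> bool}) : K :=
  (\prod_(v : 'I_(gnv G)) fn (map_tuple s (gport v))) * neq_weight s.

Definition gpair_proper (G : gadget K) (s : {ffun 'I_(gm G) -> bool}) : bool :=
  [forall h, if gpair h is Some h' then s h != s h' else true].

Lemma neq_weightE (G : gadget K) (s : {ffun 'I_(gm G) -> bool}) :
  (forall h h' : 'I_(gm G), gpair h = Some h' -> h' != h /\ gpair h' = Some h) ->
  neq_weight s = (gpair_proper s)%:R.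
Proof.
move=> pair_sym.
have -> : neq_weight s =
    [forall h, if gpair h is Some h' then (h < h')%N ==> (s h != s h') else true]%:R.
  rewrite -prodr_natb; apply: eq_bigr => h _.
  by case: (gpair h) => [h'|] //; case: ltnP; rewrite ?neq2E.
congr (nat_of_bool _)%:R; apply/forallP/forallP => ok h; last first.
  by have := ok h; case: (gpair h) => // h' ->; rewrite implybT.
case E: (gpair h) => [h'|] //; have [h'h E'] := pair_sym _ _ E.
case: (ltngtP h h') => [lt_hh'|lt_h'h|/val_inj eq_hh']; last by rewrite eq_hh' eqxx in h'h.
  by have := ok h; rewrite E lt_hh'.
by have := ok h'; rewrite E' lt_h'h eq_sym.
Qed.

Lemma holant_val_closed (G : gadget K) : gdang G = [::] ->
  holant_val G [::] = \sum_(s : {ffun 'I_(gm G) -> bool}) assignment_weight s.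
Proof.
by move=> dG; apply: eq_bigl => s; apply/forallP => j; move: j; rewrite dG => -[].
Qed.

Lemma sum_holant_val (G : gadget K) (g : (size (gdang G)).-tuple bool -> K) :
  \sum_(z : (size (gdang G)).-tuple bool) holant_val G z * g z =
  \sum_(s : {ffun 'I_(gm G) -> bool})
     assignment_weight s * g (map_tuple s (in_tuple (gdang G))).
Proof.
rewrite /holant_val; under eq_bigr do rewrite mulr_suml big_mkcond.
rewrite exchange_big; apply: eq_bigr => s _ /=; rewrite -big_mkcond /=.
apply: big_pred1 => z; apply/forallP/eqP => [s_z | ->{z} j].
  by apply: eq_from_tnth => j; rewrite tnth_map (tnth_nth false z) (eqP (s_z j)).
by rewrite -tnth_map (tnth_nth false).
Qed.

End Gadgets.

Lemma sum_ffun_comp (R : nmodType) (S T rT : finType) (phi : S -> T)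
    (f : {ffun S -> rT} -> R) : bijective phi ->
  \sum_(s : {ffun T -> rT}) f [ffun x => s (phi x)] = \sum_(t : {ffun S -> rT}) f t.
Proof.
case=> psi phiK psiK; rewrite (reindex (fun t : {ffun S -> rT} => [ffun y => t (psi y)])).
  by apply: eq_bigr => t _; congr f; apply/ffunP => x; rewrite !ffunE phiK.
exists (fun s : {ffun T -> rT} => [ffun x => s (phi x)]) => s _.
  by apply/ffunP => x; rewrite !ffunE phiK.
by apply/ffunP => y; rewrite !ffunE psiK.
Qed.

Definition pairing4_proper (z : 4.-tuple bool) (i j k l : 'I_4) : bool :=
  (tnth z i != tnth z j) && (tnth z k != tnth z l).

Lemma neq2_pairing4_proper (K : comNzRingType) (z : 4.-tuple bool) (i j k l : 'I_4) :
  neq2 K (tnth z i) (tnth z j) * neq2 K (tnth z k) (tnth z l) =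
  (pairing4_proper z i j k l)%:R.
Proof. by rewrite !neq2E -natrM mulnb. Qed.

(* Each of the colourings 0011, 0110, 0101 is proper for exactly two of the three
   perfect matchings {ij, kl} of {0,1,2,3}, so any two matchings share a proper one. *)
Lemma balanced_colourings_pairing4_proper (i j k l : 'I_4) : uniq [:: i; j; k; l] ->
  (2 <= pairing4_proper [tuple false; false; true; true] i j k l
      + pairing4_proper [tuple false; true; true; false] i j k l
      + pairing4_proper [tuple false; true; false; true] i j k l)%N.
Proof.
by case: i => [[|[|[|[|?]]]] ?] //; case: j => [[|[|[|[|?]]]] ?] //;
  case: k => [[|[|[|[|?]]]] ?] //; case: l => [[|[|[|[|?]]]] ?].
Qed.

Lemma common_pairing4_proper (i j k l i' j' k' l' : 'I_4) :
  uniq [:: i; j; k; l] -> uniq [:: i'; j'; k'; l'] ->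
  exists z, pairing4_proper z i j k l && pairing4_proper z i' j' k' l'.
Proof.
move=> /balanced_colourings_pairing4_proper two /balanced_colourings_pairing4_proper two'.
have: [|| pairing4_proper [tuple false; false; true; true] i j k l &&
          pairing4_proper [tuple false; false; true; true] i' j' k' l',
          pairing4_proper [tuple false; true; true; false] i j k l &&
          pairing4_proper [tuple false; true; true; false] i' j' k' l'
        | pairing4_proper [tuple false; true; false; true] i j k l &&
          pairing4_proper [tuple false; true; false; true] i' j' k' l'].
  by move: two two'; do 6!case: (pairing4_proper _ _ _ _ _).
by case/or3P => ok; eexists; exact: ok.
Qed.

Lemma sum_pairing4_proper_neq0 (K : numDomainType) (i j k l i' j' k' l' : 'I_4) :
  uniq [:: i; j; k; l] -> uniq [:: i'; j'; k'; l'] ->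
  \sum_(z : 4.-tuple bool)
     (pairing4_proper z i j k l)%:R * (pairing4_proper z i' j' k' l')%:R != 0 :> K.
Proof.
move=> u u'; have [z zok] := common_pairing4_proper u u'.
under eq_bigr do rewrite -natrM mulnb.
by rewrite -natr_sum pnatr_eq0 (bigD1 z) //= zok.
Qed.

Section MatchingProper.
Variable T : finType.

Definition matching_proper (p : T -> T) (t : {ffun T -> bool}) :=
  [forall x, t x != t (p x)].

Definition matching_proper_off (p : T -> T) (D : seq T) (t : {ffun T -> bool}) :=
  [forall x, (x \notin D) ==> (t x != t (p x))].

Lemma matching_proper_cut (q : T -> T) (a b : T) (D : seq T) (t : {ffun T -> bool}) :
  involutive q -> D =i [:: a; q a; b; q b] ->
  matching_proper q t = [&& matching_proper_off q D t, t a != t (q a) & t b != t (q b)].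
Proof.
move=> qI DE; apply/forallP/and3P => [ok | [/forallP off ta tb] x].
  by split=> //; apply/forallP => x; rewrite ok implybT.
case: (boolP (x \in D)) => [|xD]; last exact: (implyP (off x) xD).
by rewrite DE !inE => /or4P[] /eqP->; rewrite ?qI // eq_sym.
Qed.

End MatchingProper.

Section SlotMatchings.
Variables (K : comNzRingType) (F : hsig K) (n : nat).

Definition slot := ('I_n * 'I_(ar F))%type.

Definition vertex_weight (t : {ffun slot -> bool}) : K :=
  \prod_(v < n) fn [tuple t (v, i) | i < ar F].

Definition matching_value (p : slot -> slot) : K :=
  \sum_(t : {ffun slot -> bool}) vertex_weight t * (matching_proper p t)%:R.

Lemma eq_matching_value (p q : slot -> slot) :
  p =1 q -> matching_value p = matching_value q.
Proof.
move=> pq; apply: eq_bigr => t _; congr (_ * (nat_of_bool _)%:R).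
by apply: eq_forallb => x; rewrite pq.
Qed.

Lemma prod_fn_ports m (port : 'I_n -> (ar F).-tuple 'I_m) (phi : slot -> 'I_m)
    (s : {ffun 'I_m -> bool}) : (forall v i, tnth (port v) i = phi (v, i)) ->
  \prod_v fn (map_tuple s (port v)) = vertex_weight [ffun x => s (phi x)].
Proof.
move=> portE; apply: eq_bigr => v _; congr (fn _); apply: eq_from_tnth => i.
by rewrite tnth_map tnth_mktuple portE ffunE.
Qed.

Definition matching_gadget (p : slot -> slot) (D : seq slot) : gadget K :=
  @Gadget K #|{: slot}| n (fun _ => F) (fun v => [tuple enum_rank (v, i) | i < ar F])
    (fun h => if enum_val h \in D then None else Some (enum_rank (p (enum_val h))))
    (map enum_rank D).

Section MatchingGadget.
Variables (p : slot -> slot) (D : seq slot).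
Hypotheses (pM : matching p) (Dp : forall x, (p x \in D) = (x \in D)).

Lemma matching_gadget_pair_sym (h h' : 'I_#|{: slot}|) :
  gpair (g := matching_gadget p D) h = Some h' ->
  h' != h /\ gpair (g := matching_gadget p D) h' = Some h.
Proof.
have [pI pF] := pM; rewrite /=; case: ifP => // hD [<-].
split; first by rewrite -[X in _ != X]enum_valK (inj_eq enum_rank_inj) pF.
by rewrite enum_rankK Dp hD pI enum_valK.
Qed.

Lemma matching_gadget_over (Fs : hsig K -> Prop) :
  uniq D -> Fs F -> gadget_over Fs (matching_gadget p D).
Proof.
move=> Du FsF; split=> //; split; [|split; [|split; [|split]]].
- by move=> v w i j /=; rewrite !tnth_mktuple => /enum_rank_inj[-> ->].
- move=> h; exists (enum_val h).1, (enum_val h).2.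
  by rewrite tnth_mktuple -surjective_pairing enum_valK.
- exact: matching_gadget_pair_sym.
- by rewrite map_inj_uniq //; exact: enum_rank_inj.
- by move=> h /=; rewrite -{1}(enum_valK h) (mem_map enum_rank_inj); case: ifP.
Qed.

Lemma matching_gadget_weight (s : {ffun 'I_#|{: slot}| -> bool}) :
  assignment_weight (G := matching_gadget p D) s =
  vertex_weight [ffun x => s (enum_rank x)] *
  (matching_proper_off p D [ffun x => s (enum_rank x)])%:R.
Proof.
rewrite /assignment_weight (prod_fn_ports s (phi := enum_rank)) => [|v i]; last first.
  by rewrite tnth_mktuple.
rewrite neq_weightE; last exact: matching_gadget_pair_sym.
congr (_ * (nat_of_bool _)%:R); apply/forallP/forallP => ok y.
  by have := ok (enum_rank y); rewrite /= enum_rankK !ffunE; case: ifP.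
by have := ok (enum_val y); rewrite /= !ffunE enum_valK; case: ifP.
Qed.

End MatchingGadget.

Lemma matching_value_cut (q : slot -> slot) (d0 d1 d2 d3 : slot) (i j k l : 'I_4) :
  matching q -> (forall x, (q x \in [:: d0; d1; d2; d3]) = (x \in [:: d0; d1; d2; d3])) ->
  (forall t : {ffun slot -> bool}, matching_proper q t =
     matching_proper_off q [:: d0; d1; d2; d3] t &&
     pairing4_proper [tuple t d0; t d1; t d2; t d3] i j k l) ->
  matching_value q = \sum_(z : 4.-tuple bool)
    holant_val (matching_gadget q [:: d0; d1; d2; d3]) z * (pairing4_proper z i j k l)%:R.
Proof.
move=> qM Dq cutE.
rewrite (sum_holant_val (G := matching_gadget q [:: d0; d1; d2; d3])
  (fun z : 4.-tuple bool => (pairing4_proper z i j k l)%:R)).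
rewrite /matching_value -(sum_ffun_comp _ (enum_rank_bij _)); apply: eq_bigr => s _.
rewrite matching_gadget_weight // cutE -mulnb natrM mulrA !ffunE.
by congr (_ * (nat_of_bool (pairing4_proper _ _ _ _ _))%:R); apply: val_inj.
Qed.

End SlotMatchings.

Lemma uniq_perm4 (t : 'S_4) : uniq [:: t (inord 0); t (inord 1); t (inord 2); t (inord 3)].
Proof.
rewrite -[[:: _; _; _; _]]/(map t [:: inord 0; inord 1; inord 2; inord 3]).
rewrite map_inj_uniq; last exact: perm_inj.
by rewrite /= !inE -!val_eqE /= !inordK.
Qed.

Section Switching.
Variables (K : numDomainType) (F : hsig K) (n : nat) (Fs : hsig K -> Prop).
Hypotheses (HP : premiseP Fs) (FsF : Fs F).
Local Notation slot := (slot F n).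
Local Notation o k := (@Ordinal 4 k isT).

Lemma matching_value_switch (p : slot -> slot) (x y : slot) :
  matching p -> y != x -> y != p x ->
  (matching_value (switch p x y) == 0) = (matching_value p == 0).
Proof.
move=> pM yx ypx; have [pI _] := pM.
set p' := switch p x y; have p'M : matching p' := switch_matching pM yx ypx.
have [sx _ spx _] := switch_on_pairs pM yx ypx.
set D := [:: x; p x; y; p y].
have D' : D =i [:: x; p' x; p x; p' (p x)].
  by move=> z; rewrite /p' sx spx !inE; case: (z == x) => //=; rewrite orbCA.
have Dp z : (p z \in D) = (z \in D) by exact: mem_pairs_involutive.
have Dp' z : (p' z \in D) = (z \in D) by rewrite !D' mem_pairs_involutive //; case: p'M.
have cut_realizable :
    realizable Fs (fun z : 4.-tuple bool => holant_val (matching_gadget p D) z).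
  exists (matching_gadget p D); split=> //.
  exact: (matching_gadget_over pM Dp (switch_uniq pM yx ypx)).
have [lam [tau f_tau]] := HP.2 _ cut_realizable.
have cut_value q i j k l : matching q -> (forall z, (q z \in D) = (z \in D)) ->
    matching_gadget q D = matching_gadget p D ->
    (forall t, matching_proper q t = matching_proper_off q D t &&
               pairing4_proper [tuple t x; t (p x); t y; t (p y)] i j k l) ->
    matching_value q = lam * \sum_(z : 4.-tuple bool)
      (pairing4_proper z (tau (inord 0)) (tau (inord 1)) (tau (inord 2)) (tau (inord 3)))%:R
      * (pairing4_proper z i j k l)%:R.
  move=> qM Dq gq cutq; rewrite (matching_value_cut qM Dq cutq) gq mulr_sumr.
  by apply: eq_bigr => z _; rewrite f_tau -[lam * _ * _]mulrA neq2_pairing4_proper mulrA.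
(* The switch pairs x with y and p x with p y. *)
rewrite (cut_value p' (o 0) (o 2) (o 1) (o 3)) //; first last.
- by move=> t; rewrite (matching_proper_cut t _ D') /p' ?sx ?spx //; case: p'M.
- rewrite /matching_gadget; congr Gadget; apply: functional_extensionality => h.
  by rewrite /p'; case: ifPn => // /switch_out ->.
rewrite (cut_value p (o 0) (o 1) (o 2) (o 3)) //; last first.
  by move=> t; rewrite (matching_proper_cut (a := x) (b := y) (D := D)) //; exact: pI.
by rewrite !mulf_eq0 !(negbTE (sum_pairing4_proper_neq0 K (uniq_perm4 tau) _)).
Qed.

End Switching.

Section ClosedNetworks.
Variables (K : comNzRingType) (F : hsig K) (n : nat).
Local Notation slot := (slot F n).

Lemma closed_network_matching (G : gadget K) : closed_network F n G ->
  exists2 p : slot -> slot, matching p & holant_val G [::] = matching_value p.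
Proof.
case: G => m nv lab port pair dang [[port_inj [port_onto [pair_sym [_ dangE]]]]].
move=> /= [dang0 [nvE labE]]; subst nv dang.
have labF : lab = fun=> F by apply: functional_extensionality.
subst lab; rewrite /= in port port_inj port_onto pair_sym dangE *.
pose phi (x : slot) := tnth (port x.1) x.2.
have phi_inj : injective phi.
  by move=> [v i] [w j] /port_inj /= [<- /val_inj <-].
have phi_onto h : exists x, phi x == h.
  by have [v [i <-]] := port_onto h; exists (v, i).
pose psi h := xchoose (phi_onto h).
have psiK : cancel psi phi by move=> h; exact/eqP/(xchooseP (phi_onto h)).
have phiK : cancel phi psi by move=> x; apply: phi_inj; rewrite psiK.
pose gp h := odflt h (pair h).
have pairE h : pair h = Some (gp h) by move: (dangE h); rewrite in_nil /gp; case: (pair h).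
pose p x := psi (gp (phi x)).
have phi_p x : phi (p x) = gp (phi x) by rewrite psiK.
have pM : matching p.
  split=> [x | x]; have [gp_neq] := pair_sym _ _ (pairE (phi x)); rewrite pairE => -[gpK].
    by apply: phi_inj; rewrite !phi_p gpK.
  by apply: contra gp_neq => /eqP/(congr1 phi); rewrite phi_p => ->.
exists p => //; rewrite holant_val_closed // /matching_value.
rewrite -(sum_ffun_comp _ (Bijective phiK psiK)).
apply: eq_bigr => s _; rewrite /assignment_weight (prod_fn_ports s (phi := phi)) //.
rewrite neq_weightE //; congr (_ * (nat_of_bool _)%:R); apply/forallP/forallP => ok x.
  by have := ok (phi x); rewrite /= pairE !ffunE phi_p.
by have := ok (psi x); rewrite /= !ffunE phi_p psiK pairE.
Qed.

End ClosedNetworks.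

Unset Implicit Arguments.

Theorem mainTheorem9 (R : realType) (Fs : hsig R[i] -> Prop) (F : hsig R[i]) :
  premiseP Fs -> Fs F ->
  forall n : nat, (0 < n)%N ->
    (forall G : gadget R[i], closed_network F n G -> holant_val G [::] = 0) \/
    (forall G : gadget R[i], closed_network F n G -> holant_val G [::] != 0).
Proof.
move=> HP FsF n _.
have zero_invariant : forall p q : slot F n -> slot F n, matching p -> matching q ->
    (matching_value p == 0) = (matching_value q == 0).
  apply: (matching_switch_invariant (c := fun p => matching_value p == 0)).
    by move=> p q /eq_matching_value ->.
  by move=> p x y; exact: (matching_value_switch HP FsF).
case: (classic (exists2 G, closed_network F n G & holant_val G [::] = 0)).
  case=> G0 G0net G0zero; left => G Gnet.
  have [p0 p0M p0E] := closed_network_matching G0net.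
  have [p pM ->] := closed_network_matching Gnet.
  by apply/eqP; rewrite (zero_invariant _ _ pM p0M) -p0E G0zero.
by move=> nonzero; right => G Gnet; apply/eqP => Gzero; apply: nonzero; exists G.
Qed.
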